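(* Let $k\ge1$ and $n$ be integers. For the graph $G(n,k)$ the following are equivalent: (A) $k-1$ lies in the tail; (B) $n_k$ lies in the tail; (C) $(n-1)_{k+1}$ lies in the tail.
   Context: For an integer $\ell$, $\ell_k$ and $\ell_{k+1}$ denote the least nonnegative residues of $\ell$ modulo $k$ and $k+1$. $G(n,k)$ is the directed graph on vertices $0,1,\dots,k$ whose edges are exactly the $k$ edges $(i+n-2)_{k+1}\to(i+n-1)_k$, $1\le i\le k$; a loop $a\to a$ counts as a cycle. Vertex $k$ has in-degree $0$, vertex $(n-2)_{k+1}$ has out-degree $0$, and all other vertices have in- and out-degree $1$, so $G(n,k)$ is a disjoint union of directed cycles and one directed path, the tail, from $k$ to $(n-2)_{k+1}$ (consisting of the single vertex $k$ if $k=(n-2)_{k+1}$). *)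

From mathcomp Require Import all_boot all_order all_algebra.
Set Implicit Arguments. Unset Strict Implicit. Unset Printing Implicit Defensive.
Import Order.TTheory GRing.Theory Num.Theory.

Definition resid (l : int) (m : nat) : nat := `|(l %% (m%:Z))%Z|%N.

(* Edge relation of G(n,k) on vertices (naturals 0..k):
   (i+n-2)_{k+1} -> (i+n-1)_k for 1 <= i <= k  (i = j.+1, j : 'I_k). *)
Definition gedge (n : int) (k : nat) : rel nat :=
  fun a b => [exists j : 'I_k,
    (a == resid ((j.+1)%:Z + n - 2)%R k.+1) &&
    (b == resid ((j.+1)%:Z + n - 1)%R k)].

(* v lies in the tail: v lies on the directed path of G(n,k) starting at
   vertex k (in-degree 0), i.e. v is reachable from k by following edges. *)
Definition in_tail (n : int) (k : nat) (v : nat) : Prop :=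
  exists s : seq nat, path (gedge n k) k s /\ last k s = v.

From mathcomp Require Import all_boot all_order all_algebra.
From mathcomp Require Import zify.
Set Implicit Arguments.
Unset Strict Implicit.
Import GRing.Theory Num.Theory.

(* Adding to G(n,k) the edge from the sink (n-2)_{k+1} back to k turns it into the
   functional graph of the permutation gsucc = rho \o sigma of {0,...,k}, where
   sigma v = (n-3-v)_{k+1} and rho v = (n-1-v)_k (with rho k = k) are involutions;
   the tail becomes the gsucc-cycle through k. An involution g with f (g (f x)) = g x
   maps every f-orbit onto an f-orbit, reversing it. As rho fixes k and sigma sends k
   to the sink, both preserve the tail, and rho (k-1) = n_k, sigma (k-1) = (n-1)_{k+1}. *)

Lemma residE (l : int) (m : nat) : (0 < m)%N -> Posz (resid l m) = (l %% m)%Z.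
Proof. by move=> m_gt0; rewrite /resid gez0_abs // modz_ge0 //; lia. Qed.

Lemma resid_lt (l : int) (m : nat) : (0 < m)%N -> (resid l m < m)%N.
Proof. by move=> m_gt0; rewrite -ltz_nat residE // ltz_pmod. Qed.

Lemma resid_small (r m : nat) : (r < m)%N -> resid r m = r.
Proof. by move=> lt_rm; rewrite /resid modz_small //; lia. Qed.

Lemma resid_congr (l l' c : int) (m : nat) : l = (l' + c * m%:Z)%R -> resid l m = resid l' m.
Proof. by move->; rewrite /resid addrC modzMDl. Qed.

Lemma residP (l c : int) (m r : nat) : (r < m)%N -> l = (r%:Z + c * m%:Z)%R -> resid l m = r.
Proof. by move=> lt_rm /resid_congr ->; rewrite resid_small. Qed.

Lemma resid_subr (c l : int) (m : nat) : (0 < m)%N ->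
  resid (c - (resid l m)%:Z)%R m = resid (c - l)%R m.
Proof. by move=> m_gt0; rewrite residE // /resid -modzDmr modzNm modzDmr. Qed.

Lemma resid_reflK (c : int) (m v : nat) : (v < m)%N ->
  resid (c - (resid (c - v%:Z)%R m)%:Z)%R m = v.
Proof.
by move=> lt_vm; rewrite resid_subr ?(leq_ltn_trans _ lt_vm) // opprB addrC subrK resid_small.
Qed.

Section Reversal.

Variables (T : finType) (f g : T -> T).
Hypothesis fgf : forall x, f (g (f x)) = g x.

Lemma iter_reversal j x : iter j f (g (iter j f x)) = g x.
Proof. by elim: j x => //= j IHj x; rewrite -iterS iterSr fgf IHj. Qed.

Lemma fconnect_reversal x y : fconnect f x y -> fconnect f (g y) (g x).
Proof.
move=> /iter_findex <-; set j := findex f x y.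
by rewrite -(iter_reversal j x) fconnect_iter.
Qed.

Hypothesis gK : involutive g.

Lemma reversal_inj : injective f.
Proof. by move=> x y fx_fy; apply: (inv_inj gK); rewrite -fgf fx_fy fgf. Qed.

Lemma fconnect_involution x y : fconnect f (g x) (g y) = fconnect f x y.
Proof.
have fsym := fconnect_sym reversal_inj.
apply/idP/idP=> [/fconnect_reversal | /fconnect_reversal]; last by rewrite fsym.
by rewrite !gK fsym.
Qed.

End Reversal.

Section CutOrbit.

Variables (T : finType) (f : T -> T) (s : T).

Lemma cut_pathP x y : f s = x ->
  (exists p, path [rel a b | (a != s) && (b == f a)] x p /\ last x p = y) <->
  fconnect f x y.
Proof.
move=> fs_x; split=> [[p [e_p <-]] | xy].
  apply/connectP; exists p => //.
  by apply: sub_path e_p => a _ /andP [_ /eqP ->] /=.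
suff: forall i, (i <= findex f x y)%N ->
    exists p, path [rel a b | (a != s) && (b == f a)] x p /\ last x p = iter i f x.
  by move/(_ _ (leqnn _)); rewrite iter_findex.
elim=> [|i IHi] le_ij; first by exists [::].
have [p [e_p l_p]] := IHi (ltnW le_ij).
have ne_s : iter i f x != s.
  apply/eqP=> is_s.
  have := findex_iter (leq_ltn_trans le_ij (findex_max xy)).
  by rewrite iterS is_s fs_x findex0.
exists (rcons p (iter i.+1 f x)).
by rewrite rcons_path e_p last_rcons l_p /= ne_s eqxx.
Qed.

End CutOrbit.

Lemma path_ordP (m : nat) (e : rel nat) (x y : 'I_m) :
  (forall a b, e a b -> (b < m)%N) ->
  (exists p, path e x p /\ last (val x) p = val y) <->
  (exists p, path (relpre val e) x p /\ last x p = y).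
Proof.
move=> e_lt; split=> [[p [e_p l_p]] | [p [e_p <-]]]; last first.
  by exists (map val p); rewrite path_map last_map.
have p_lt : all (fun b => b < m)%N p.
  by elim: p (val x) e_p {l_p} => //= b p IHp a /andP [/e_lt -> /IHp].
have p_val : map val (pmap (insub : nat -> option 'I_m) p) = p.
  by rewrite (pmap_filter (insubK _)) (eq_filter (isSome_insub _)); apply/all_filterP.
exists (pmap insub p); rewrite -path_map p_val; split=> //.
by apply: val_inj; rewrite -last_map p_val.
Qed.

Section TailOfG.

Variables (n : int) (k : nat).

Definition sigma (v : 'I_k.+1) : 'I_k.+1 := inord (resid (n - 3 - v%:Z)%R k.+1).

Definition rho (v : 'I_k.+1) : 'I_k.+1 :=
  if (v < k)%N then inord (resid (n - 1 - v%:Z)%R k) else v.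

Definition gsucc : 'I_k.+1 -> 'I_k.+1 := rho \o sigma.

Lemma sigmaE (v : 'I_k.+1) : sigma v = resid (n - 3 - v%:Z)%R k.+1 :> nat.
Proof. by rewrite inordK ?resid_lt. Qed.

Lemma rhoE (v : 'I_k.+1) : (v < k)%N -> rho v = resid (n - 1 - v%:Z)%R k :> nat.
Proof.
move=> lt_vk; have lt_r : (resid (n - 1 - v%:Z)%R k < k)%N by apply: resid_lt; lia.
by rewrite /rho lt_vk inordK //; lia.
Qed.

Lemma sigmaK : involutive sigma.
Proof. by move=> v; apply: ord_inj; rewrite !sigmaE resid_reflK. Qed.

Lemma rhoK : involutive rho.
Proof.
move=> v; case: (ltnP v k) => [lt_vk | le_kv].
  have lt_rho : (rho v < k)%N by rewrite rhoE // resid_lt //; lia.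
  by apply: ord_inj; rewrite (rhoE lt_rho) (rhoE lt_vk) (resid_reflK _ lt_vk).
have rho_v : rho v = v by rewrite /rho ltnNge le_kv.
by rewrite !rho_v.
Qed.

Lemma gsucc_rho_gsucc v : gsucc (rho (gsucc v)) = rho v.
Proof. by rewrite /gsucc /= rhoK sigmaK. Qed.

Lemma gsucc_sigma_gsucc v : gsucc (sigma (gsucc v)) = sigma v.
Proof. by rewrite /gsucc /= sigmaK rhoK. Qed.

Lemma rho_max : rho ord_max = ord_max.
Proof. by rewrite /rho ltnn. Qed.

Lemma gsucc_sigma_max : gsucc (sigma ord_max) = ord_max.
Proof. by rewrite /gsucc /= sigmaK rho_max. Qed.

Lemma sigma_src (a : 'I_k.+1) (j : nat) : (j < k)%N ->
  (a == resid (j.+1%:Z + n - 2)%R k.+1 :> nat) = (sigma a == k.-1 - j :> nat).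
Proof.
move=> lt_jk; apply/eqP/eqP=> [a_src | sigma_a].
  by rewrite sigmaE a_src resid_subr //; apply: (residP (c := -1)); lia.
by rewrite -[a]sigmaK sigmaE sigma_a; apply: (resid_congr (c := -1)); lia.
Qed.

Lemma gedgeE (a b : 'I_k.+1) : gedge n k a b = (a != sigma ord_max) && (b == gsucc a).
Proof.
have -> : (a != sigma ord_max) = (sigma a < k)%N.
  by rewrite -(inv_eq sigmaK) -val_eqE /=; have := ltn_ord (sigma a); lia.
apply/existsP/andP=> [[j /andP [a_j /eqP b_j]] | [lt_ak /eqP ->]].
  have lt_jk := ltn_ord j.
  move: a_j; rewrite sigma_src // => /eqP sigma_a.
  have lt_ak : (sigma a < k)%N by lia.
  split=> //; apply/eqP/ord_inj.
  by rewrite b_j /gsucc /= rhoE // sigma_a; apply: (resid_congr (c := 1)); lia.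
have lt_jk : (k.-1 - sigma a < k)%N by lia.
exists (Ordinal lt_jk); rewrite /= sigma_src // /gsucc /= rhoE //.
by apply/andP; split; apply/eqP; [lia | apply: (resid_congr (c := -1)); lia].
Qed.

Lemma in_tailE (v : nat) : (v <= k)%N -> in_tail n k v <-> fconnect gsucc ord_max (inord v).
Proof.
move=> le_vk.
have gedge_lt a b : gedge n k a b -> (b < k.+1)%N.
  by case/existsP=> j /andP [_ /eqP ->]; apply/leqW/resid_lt; case: j => j /=; lia.
have tail_ord := path_ordP ord_max (inord v) gedge_lt.
rewrite /= inordK // in tail_ord; apply: (iff_trans tail_ord).
apply: iff_trans (cut_pathP (inord v) gsucc_sigma_max).
have e_eq := eq_path gedgeE.
by split=> [] [p [e_p l_p]]; exists p; rewrite ?e_eq // -e_eq.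
Qed.

Lemma gsucc_inj : injective gsucc.
Proof. exact: reversal_inj gsucc_rho_gsucc rhoK. Qed.

Lemma fconnect_rho v : fconnect gsucc ord_max (rho v) = fconnect gsucc ord_max v.
Proof. by rewrite -{1}rho_max (fconnect_involution gsucc_rho_gsucc rhoK). Qed.

Lemma fconnect_sigma v : fconnect gsucc ord_max (sigma v) = fconnect gsucc ord_max v.
Proof.
rewrite -{1}gsucc_sigma_max -(same_fconnect1 gsucc_inj).
by rewrite (fconnect_involution gsucc_sigma_gsucc sigmaK).
Qed.

Lemma rho_predk : (0 < k)%N -> rho (inord k.-1) = inord (resid n k).
Proof.
move=> k_gt0; have lt_r := resid_lt n k_gt0.
apply: ord_inj; rewrite rhoE !inordK //; try lia.
by apply: (resid_congr (c := -1)); lia.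
Qed.

Lemma sigma_predk : (0 < k)%N -> sigma (inord k.-1) = inord (resid (n - 1)%R k.+1).
Proof.
move=> k_gt0; apply: ord_inj; rewrite sigmaE !inordK ?resid_lt //; try lia.
by apply: (resid_congr (c := -1)); lia.
Qed.

End TailOfG.

Theorem lemma4p5 (n : int) (k : nat) (hk : (1 <= k)%N) :
  (in_tail n k k.-1 <-> in_tail n k (resid n k)) /\
  (in_tail n k (resid n k) <-> in_tail n k (resid (n - 1)%R k.+1)).
Proof.
have le_resid (l : int) m : (0 < m)%N -> (resid l m <= m)%N by move/(resid_lt l)/ltnW.
rewrite !in_tailE ?leq_pred ?le_resid //; last exact: (resid_lt _ (ltn0Sn k)).
by rewrite -rho_predk // -sigma_predk // fconnect_rho fconnect_sigma.
Qed.
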